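(* Let $n\geq 2$, let $F_n$ be the free group with free basis $x_1,\dots,x_n$, let $\varphi\in\mathrm{Aut}(F_n)$, and let $G_\varphi=F_n\rtimes\langle t\rangle$ be the semidirect product with an infinite cyclic group $\langle t\rangle$ in which conjugation by $t$ induces $\varphi$ on $F_n$. Let $A\in\mathrm{GL}_n(\mathbb{Z})$ be the matrix of the automorphism of $F_n/F_n'\cong\mathbb{Z}^n$ induced by $\varphi$, and let $E$ be the $n\times n$ identity matrix. If $A-E\in\mathrm{GL}_n(\mathbb{Z})$, then $\bigcap_{i=1}^{\infty}\gamma_i(G_\varphi)=F_n$, and in particular $G_\varphi$ is not residually nilpotent.
   Context: $\gamma_i(G)$ denotes the $i$-th term of the lower central series of $G$: $\gamma_1(G)=G$, $\gamma_{i+1}(G)=[\gamma_i(G),G]$. $F_n'$ is the commutator subgroup of $F_n$. A group is residually nilpotent if the intersection of its lower central series is trivial. *)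

From mathcomp Require Import all_boot all_order all_algebra.
Set Implicit Arguments. Unset Strict Implicit. Unset Printing Implicit Defensive.
Import Order.TTheory GRing.Theory Num.Theory.

Section FreeGroup.
Variable n : nat.

(* a letter (i, false) is x_i, (i, true) is x_i^-1 *)
Definition letter := ('I_n * bool)%type.

Definition cancels (a b : letter) : bool := (a.1 == b.1) && (a.2 != b.2).

Fixpoint reduced (w : seq letter) : bool :=
  match w with
  | a :: ((b :: _) as w') => ~~ cancels a b && reduced w'
  | _ => true
  end.

Definition red_cons (a : letter) (w : seq letter) : seq letter :=
  match w with
  | b :: w' => if cancels a b then w' else a :: w
  | [::] => [:: a]
  end.

Definition nf (w : seq letter) : seq letter := foldr red_cons [::] w.

Lemma reduced_behead a w : reduced (a :: w) -> reduced w.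
Proof. by case: w => //= b w /andP[]. Qed.

Lemma red_cons_reduced a w : reduced w -> reduced (red_cons a w).
Proof.
case: w => [|b w] //= Hw.
case: ifP => Hc; first exact: (reduced_behead Hw).
by rewrite /= Hc Hw.
Qed.

Lemma nf_reduced w : reduced (nf w).
Proof. by elim: w => [|a w IH] //=; apply: red_cons_reduced. Qed.

Definition FG := {w : seq letter | reduced w}.

Definition FGone : FG := exist _ [::] erefl.
Definition FGmul (u v : FG) : FG := exist _ (nf (sval u ++ sval v)) (nf_reduced _).
Definition flip (a : letter) : letter := (a.1, ~~ a.2).
Definition FGinv (u : FG) : FG := exist _ (nf (rev (map flip (sval u)))) (nf_reduced _).

Definition FGgen (i : 'I_n) : FG := exist _ [:: (i, false)] erefl.

(* exponent sum of x_i in a word: the image in F_n/F_n' = Z^n, coordinate i *)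
Definition expsum (i : 'I_n) (w : seq letter) : int :=
  \sum_(a <- w) (if a.1 == i then (if a.2 then (-1)%R else 1%R) else 0%R).

Definition is_FGhom (f : FG -> FG) : Prop :=
  forall u v, f (FGmul u v) = FGmul (f u) (f v).

(* matrix of the automorphism of F_n/F_n' = Z^n induced by phi:
   column j is the image of x_j *)
Definition abmat (phi : FG -> FG) : 'M[int]_n :=
  \matrix_(i < n, j < n) expsum i (sval (phi (FGgen j))).

(* Semidirect product G_phi = F_n x| <t>, element (u, k) stands for u t^k,
   where t v t^-1 = phi v.  psi is the inverse of phi. *)
Definition iterz (phi psi : FG -> FG) (k : int) : FG -> FG :=
  match k with
  | Posz m => iter m phi
  | Negz m => iter m.+1 psi
  end.

Definition SD := (FG * int)%type.

Definition SDone : SD := (FGone, 0%R).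
Definition SDmul (phi psi : FG -> FG) (g h : SD) : SD :=
  (FGmul g.1 (iterz phi psi g.2 h.1), (g.2 + h.2)%R).
Definition SDinv (phi psi : FG -> FG) (g : SD) : SD :=
  (iterz phi psi (- g.2)%R (FGinv g.1), (- g.2)%R).
Definition SDcomm (phi psi : FG -> FG) (g h : SD) : SD :=
  SDmul phi psi (SDmul phi psi (SDinv phi psi g) (SDinv phi psi h))
        (SDmul phi psi g h).

Inductive gen (phi psi : FG -> FG) (S : SD -> Prop) : SD -> Prop :=
  | gen_one : gen phi psi S SDone
  | gen_mem g : S g -> gen phi psi S g
  | gen_mul g h : gen phi psi S g -> gen phi psi S h -> gen phi psi S (SDmul phi psi g h)
  | gen_inv g : gen phi psi S g -> gen phi psi S (SDinv phi psi g).

(* lcs k = gamma_{k+1}(G_phi) *)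
Fixpoint lcs (phi psi : FG -> FG) (k : nat) : SD -> Prop :=
  match k with
  | 0 => fun _ => True
  | k'.+1 => gen phi psi (fun x => exists a g, lcs phi psi k' a /\ x = SDcomm phi psi a g)
  end.

Definition gamma (phi psi : FG -> FG) (i : nat) : SD -> Prop := lcs phi psi i.-1.

Definition residually_nilpotent (phi psi : FG -> FG) : Prop :=
  forall g : SD, (forall i, (0 < i)%N -> gamma phi psi i g) -> g = SDone.

End FreeGroup.

From mathcomp Require Import all_boot all_order all_algebra.
From mathcomp Require Import zify.
Import GRing.Theory Num.Theory.
Set Implicit Arguments. Unset Strict Implicit. Unset Printing Implicit Defensive.

(* If
   F_n is contained in gamma_i, then K = gamma_(i+1) /\ F_n is a subgroup of
   F_n containing every commutator of F_n and every [u, t^-1] = u^-1 phi(u).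
   The first fact gives F_n' <= K, so K is determined by its image in
   F_n/F_n' = Z^n; by the second, that image contains the columns of A - E,
   which span Z^n because A - E is invertible over Z.  Conversely gamma_2 is
   contained in F_n because G_phi/F_n is abelian. *)

Section FreeGroupLaws.
Variable n : nat.
Implicit Types (u v w : FG n) (a b : letter n) (s t z : seq (letter n)).

Local Notation "u ** v" := (FGmul u v) (at level 40, left associativity).
Local Notation one := (FGone n).

Lemma flipK : involutive (@flip n).
Proof. by case=> i x; rewrite /flip /= negbK. Qed.

Lemma cancels_flip a b : cancels a b -> b = flip a.
Proof.
case: a b => [i x] [j y]; rewrite /cancels /flip /= => /andP[/eqP ->].
by case: x; case: y.
Qed.

Lemma cancels_flipr a : cancels a (flip a).
Proof. by rewrite /cancels /= eqxx; case: (a.2). Qed.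

Lemma nf_id s : reduced s -> nf s = s.
Proof.
elim: s => [|a s IH] //= Hs.
rewrite IH ?(reduced_behead Hs) //.
by case: s Hs {IH} => //= b s /andP[/negbTE -> _].
Qed.

Lemma red_consK a s : reduced s -> red_cons (flip a) (red_cons a s) = s.
Proof.
case: s => [|b s] /= Hs; first by rewrite -{2}(flipK a) cancels_flipr.
case: ifP => [/cancels_flip Eb | _].
  by move: Hs; rewrite Eb; case: s => [|c s] //= /andP[/negbTE -> _].
by rewrite /= -{2}(flipK a) cancels_flipr.
Qed.

Lemma foldr_red_cons_reduced z s :
  reduced z -> reduced (foldr (@red_cons n) z s).
Proof. by move=> Hz; elim: s => //= a s IH; apply: red_cons_reduced. Qed.

Lemma foldr_red_cons_nf z s : reduced z ->
  foldr (@red_cons n) z (nf s) = foldr (@red_cons n) z s.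
Proof.
move=> Hz; elim: s => [|a s IH] //=.
rewrite -IH; have := nf_reduced s.
case: (nf s) => [|b w] //= Hw.
case: ifP => [/cancels_flip -> | //].
by rewrite /= -{1}(flipK a) red_consK // foldr_red_cons_reduced.
Qed.

Lemma nf_cat s t : nf (s ++ t) = foldr (@red_cons n) (nf t) s.
Proof. by rewrite /nf foldr_cat. Qed.

Lemma nf_catl s t : nf (nf s ++ t) = nf (s ++ t).
Proof. by rewrite !nf_cat foldr_red_cons_nf // nf_reduced. Qed.

Lemma nf_catr s t : nf (s ++ nf t) = nf (s ++ t).
Proof. by rewrite !nf_cat (nf_id (nf_reduced t)). Qed.

Lemma foldr_red_consV z s : reduced z ->
  foldr (@red_cons n) (foldr (@red_cons n) z s) (rev (map (@flip n) s)) = z.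
Proof.
move=> Hz; elim: s => [|a s IH] //=.
by rewrite rev_cons -cats1 foldr_cat /= red_consK ?foldr_red_cons_reduced.
Qed.

Lemma nf_invl s : nf (rev (map (@flip n) s) ++ s) = [::].
Proof. by rewrite nf_cat foldr_red_consV. Qed.

Lemma nf_invr s : nf (s ++ rev (map (@flip n) s)) = [::].
Proof.
have := nf_invl (rev (map (@flip n) s)).
by rewrite map_rev revK -map_comp (eq_map flipK) map_id.
Qed.

Lemma FG_inj u v : sval u = sval v -> u = v.
Proof.
case: u v => [s Hs] [t Ht] /= E; subst t.
by rewrite (eq_irrelevance Hs Ht).
Qed.

Lemma FGmulA u v w : u ** (v ** w) = u ** v ** w.
Proof. by apply: FG_inj; rewrite /= nf_catl nf_catr catA. Qed.

Lemma FGmul1 u : one ** u = u.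
Proof. by apply: FG_inj; rewrite /= nf_id //; case: u. Qed.

Lemma FGmulr1 u : u ** one = u.
Proof. by apply: FG_inj; rewrite /= cats0 nf_id //; case: u. Qed.

Lemma FGmulV u : FGinv u ** u = one.
Proof. by apply: FG_inj; case: u => s Hs /=; rewrite nf_catl nf_invl. Qed.

Lemma FGmulVr u : u ** FGinv u = one.
Proof. by apply: FG_inj; case: u => s Hs /=; rewrite nf_catr nf_invr. Qed.

Lemma FGmulK u v : FGinv u ** (u ** v) = v.
Proof. by rewrite FGmulA FGmulV FGmul1. Qed.

Lemma FGmulKV u v : u ** (FGinv u ** v) = v.
Proof. by rewrite FGmulA FGmulVr FGmul1. Qed.

Lemma FGinv_uniq u v : u ** v = one -> v = FGinv u.
Proof. by move=> E; rewrite -(FGmulK u v) E FGmulr1. Qed.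

Lemma FGinvK u : FGinv (FGinv u) = u.
Proof. by apply/esym/FGinv_uniq/FGmulV. Qed.

Lemma FGinvM u v : FGinv (u ** v) = FGinv v ** FGinv u.
Proof.
apply/esym/FGinv_uniq.
by rewrite FGmulA -(FGmulA u) FGmulVr FGmulr1 FGmulVr.
Qed.

Lemma FGinv1 : FGinv one = one.
Proof. exact: FG_inj. Qed.

Lemma FGhom1 (f : FG n -> FG n) : is_FGhom f -> f one = one.
Proof.
move=> Hf; have := Hf one one; rewrite FGmul1 => E.
by rewrite -(FGmulK (f one) (f one)) -E FGmulV.
Qed.

Definition FGword s : FG n := exist _ (nf s) (nf_reduced s).

Lemma FGword_nil : FGword [::] = one.
Proof. exact: FG_inj. Qed.

Lemma FGword_cat s t : FGword (s ++ t) = FGword s ** FGword t.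
Proof. by apply: FG_inj; rewrite /= nf_catl nf_catr. Qed.

Lemma FGword_val u : FGword (sval u) = u.
Proof. by apply: FG_inj; case: u => s Hs /=; rewrite nf_id. Qed.

Lemma FGword_flip a : FGword [:: flip a] = FGinv (FGword [:: a]).
Proof. exact: FG_inj. Qed.

Definition FGcomm u v := FGinv u ** FGinv v ** (u ** v).

End FreeGroupLaws.

Section Abelianization.
Variable n : nat.
Implicit Types (u v w : FG n) (a : letter n) (s t : seq (letter n)).
Local Open Scope ring_scope.

Definition letter_exp (i : 'I_n) a : int :=
  if a.1 == i then (if a.2 then -1 else 1) else 0.

Lemma expsum_cons i a s : expsum i (a :: s) = letter_exp i a + expsum i s.
Proof. by rewrite /expsum big_cons. Qed.

Lemma expsum_cat i s t : expsum i (s ++ t) = expsum i s + expsum i t.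
Proof. by rewrite /expsum big_cat. Qed.

Lemma letter_exp_flip i a : letter_exp i (flip a) = - letter_exp i a.
Proof. by rewrite /letter_exp /=; case: (_ == _) => //; case: (a.2). Qed.

Lemma expsum_red_cons i a s :
  expsum i (red_cons a s) = letter_exp i a + expsum i s.
Proof.
case: s => [|b s] /=; first by rewrite expsum_cons.
case: ifP => [/cancels_flip -> | _]; last by rewrite expsum_cons.
by rewrite !expsum_cons letter_exp_flip addrA addrN add0r.
Qed.

Lemma expsum_nf i s : expsum i (nf s) = expsum i s.
Proof. by elim: s => [|a s IH] //=; rewrite expsum_red_cons IH expsum_cons. Qed.

Lemma expsum_inv i s : expsum i (rev (map (@flip n) s)) = - expsum i s.
Proof.
rewrite /expsum big_rev big_map -sumrN; apply: eq_bigr => a _.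
exact: letter_exp_flip.
Qed.

(* Otherwise all occurrences of the generator of [a] in [a :: s] have the
   same sign. *)
Lemma flip_head_in s a : (forall i, expsum i (a :: s) = 0) -> flip a \in s.
Proof.
move=> Hs; apply/negPn/negP => Hn.
set e := letter_exp a.1 a.
have ee : e * e = 1 by rewrite /e /letter_exp eqxx; case: (a.2).
have : 0 <= e * expsum a.1 s.
  rewrite /expsum mulr_sumr big_seq; apply: sumr_ge0 => b Hb.
  rewrite /e /letter_exp eqxx; case: eqP => [Eb|]; last by rewrite mulr0.
  suff -> : b.2 = a.2 by case: (a.2).
  case: b Hb Eb => j y /= Hb Ej; subst j.
  apply/eqP; apply: contraNT Hn => Hy; rewrite /flip.
  by move: Hy Hb; case: (a.2); case: y.
have := Hs a.1; rewrite expsum_cons -/e => /(congr1 (GRing.mul e)).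
rewrite mulrDr ee mulr0 addrC => /eqP; rewrite addr_eq0 => /eqP ->.
by rewrite oppr_ge0 ler10.
Qed.

Definition abelianize w : 'cV[int]_n := \col_i expsum i (sval w).

Lemma abelianizeM u v : abelianize (FGmul u v) = abelianize u + abelianize v.
Proof. by apply/matrixP => i j; rewrite !mxE /= expsum_nf expsum_cat. Qed.

Lemma abelianizeV u : abelianize (FGinv u) = - abelianize u.
Proof. by apply/matrixP => i j; rewrite !mxE /= expsum_nf expsum_inv. Qed.

Lemma abelianize1 : abelianize (FGone n) = 0.
Proof. by apply/matrixP => i j; rewrite !mxE /expsum big_nil. Qed.

Lemma abelianize_gen k : abelianize (FGgen k) = col k 1%:M.
Proof.
apply/matrixP => i j; rewrite !mxE /expsum big_seq1 /= eq_sym.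
by case: eqP.
Qed.

Lemma abelianize_hom_gen (phi : FG n -> FG n) k :
  abelianize (phi (FGgen k)) = col k (abmat phi).
Proof. by apply/matrixP => i j; rewrite !mxE. Qed.

End Abelianization.

Section IntegerLattice.
Local Open Scope ring_scope.

Lemma mulmx_sum_col m n (M : 'M[int]_(m, n)) (v : 'cV[int]_n) :
  M *m v = \sum_k v k 0 *: col k M.
Proof.
apply/matrixP => i j; rewrite !mxE summxE; apply: eq_bigr => k _.
by rewrite !mxE (ord1 j) mulrC.
Qed.

Lemma unitmx_cols_generate n (M : 'M[int]_n) (L : 'cV[int]_n -> Prop) :
  M \in unitmx -> L 0 -> (forall c d, L c -> L d -> L (c - d)) ->
  (forall k, L (col k M)) -> forall c, L c.
Proof.
move=> uM L0 LB Lcol c.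
have LN d : L d -> L (- d) by move=> Ld; rewrite -sub0r; apply: LB.
have LD d e : L d -> L e -> L (d + e).
  by move=> Ld Le; rewrite -[e]opprK; apply/LB/LN.
have LZ (z : int) d : L d -> L (z *: d).
  move=> Ld; suff LP (m : nat) : L (m%:Z *: d).
    by case: z => m; rewrite ?NegzE ?scaleNr; [|apply: LN]; apply: LP.
  elim: m => [|m IHm]; first by rewrite scale0r.
  by rewrite -[m.+1]addn1 PoszD scalerDl scale1r; apply: LD.
have -> : c = M *m (invmx M *m c) by rewrite mulmxA mulmxV // mul1mx.
by rewrite mulmx_sum_col; apply: (big_ind L) => // k _; apply: LZ.
Qed.

End IntegerLattice.

Section SubgroupsOfFn.
Variable n : nat.
Variable K : FG n -> Prop.
Local Notation "u ** v" := (FGmul u v) (at level 40, left associativity).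
Hypothesis K1 : K (FGone n).
Hypothesis KM : forall u v, K u -> K v -> K (u ** v).
Hypothesis KV : forall u, K u -> K (FGinv u).
Hypothesis Kcomm : forall u v, K (FGcomm u v).
Local Open Scope ring_scope.

(* Induction on the length: a word with zero exponent sums has the form
   a b a^-1 c, which is the commutator [a^-1, b^-1] times the shorter b c. *)
Lemma abelian_kernel_sub s : (forall i, expsum i s = 0) -> K (FGword s).
Proof.
elim: {s}(size s) {-2}s (leqnn (size s)) => [|m IH].
  by case=> // _ _; rewrite FGword_nil.
case=> [|a s]; first by rewrite FGword_nil.
move=> Hsz Hs; have Hin := flip_head_in Hs.
case/splitPr: Hin Hsz Hs => b c Hsz Hs.
have -> : FGword (a :: b ++ flip a :: c) =
    FGcomm (FGinv (FGword [:: a])) (FGinv (FGword b)) ** FGword (b ++ c).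
  rewrite /FGcomm !FGinvK -cat1s !FGword_cat -(cat1s (flip a)) FGword_cat.
  by rewrite FGword_flip -!FGmulA FGmulK.
apply: KM => //; apply: IH.
  by move: Hsz; rewrite /= !size_cat /=; lia.
move=> i; move: (Hs i).
by rewrite expsum_cons !expsum_cat expsum_cons letter_exp_flip; lia.
Qed.

Lemma abelianize_surj_sub : (forall c, exists2 w, K w & abelianize w = c) ->
  forall u, K u.
Proof.
move=> Ksurj u; have [w Kw Ew] := Ksurj (abelianize u).
have Kd : K (FGinv u ** w).
  rewrite -(FGword_val (FGinv u ** w)); apply: abelian_kernel_sub => i.
  have : abelianize (FGinv u ** w) = 0.
    by rewrite abelianizeM abelianizeV Ew addNr.
  by move/matrixP/(_ i 0); rewrite !mxE.
by rewrite -(FGmulKV w u) -(FGinvK u) -FGinvM; apply/KM/KV.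
Qed.

End SubgroupsOfFn.
Section SemidirectProduct.
Variable n : nat.
Variables phi psi : FG n -> FG n.
Hypothesis phi_hom : is_FGhom phi.
Local Notation "u ** v" := (FGmul u v) (at level 40, left associativity).
Local Notation one := (FGone n).
Local Open Scope ring_scope.

Lemma SDmul0 u v : SDmul phi psi (u, 0) (v, 0) = (u ** v, 0).
Proof. by rewrite /SDmul /= addr0. Qed.

Lemma SDinv0 u : SDinv phi psi (u, 0) = (FGinv u, 0).
Proof. by rewrite /SDinv /= oppr0. Qed.

Lemma SDcomm0 u v : SDcomm phi psi (u, 0) (v, 0) = (FGcomm u v, 0).
Proof. by rewrite /SDcomm !SDinv0 !SDmul0. Qed.

Lemma SDcomm_tV u : SDcomm phi psi (u, 0) (one, -1) = (FGinv u ** phi u, 0).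
Proof.
rewrite /SDcomm SDinv0.
have -> : SDinv phi psi (one, -1) = (one, 1).
  by rewrite /SDinv /= opprK FGinv1 (FGhom1 phi_hom).
by rewrite /SDmul /= !FGmulr1 !add0r addrN.
Qed.

Lemma abelianize_twisted_gen k :
  abelianize (FGinv (FGgen k) ** phi (FGgen k)) = col k (abmat phi - 1%:M).
Proof.
rewrite abelianizeM abelianizeV abelianize_gen abelianize_hom_gen addrC.
by apply/matrixP => i j; rewrite !mxE.
Qed.

Lemma lcs1_snd0 g : lcs phi psi 1 g -> g.2 = 0.
Proof.
elim=> [|_ [a [h [_ ->]]]|x y _ Hx _ Hy|x _ Hx] //=.
- by rewrite /SDcomm /SDmul /SDinv /=; lia.
- by rewrite Hx Hy addr0.
- by rewrite Hx oppr0.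
Qed.

Hypothesis unit_abmat_sub1 : abmat phi - 1%:M \in unitmx.

Lemma lcs_base i u : lcs phi psi i (u, 0).
Proof.
elim: i u => [|i IH] //=.
set S := fun x => exists a g, lcs phi psi i a /\ x = SDcomm phi psi a g.
pose K u := gen phi psi S (u, 0); rewrite -/(K _).
have K1 : K one by apply: gen_one.
have KM u v : K u -> K v -> K (u ** v) by rewrite /K -SDmul0; apply: gen_mul.
have KV u : K u -> K (FGinv u) by rewrite /K -SDinv0; apply: gen_inv.
have Kcomm u v : K (FGcomm u v).
  by rewrite /K -SDcomm0; apply: gen_mem; exists (u, 0), (v, 0).
have Ktwisted u : K (FGinv u ** phi u).
  by rewrite /K -SDcomm_tV; apply: gen_mem; exists (u, 0), (one, -1).
apply: (abelianize_surj_sub K1 KM KV Kcomm) => c.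
apply: (unitmx_cols_generate (L := fun c => exists2 w, K w & abelianize w = c))
  unit_abmat_sub1 _ _ _ c.
- by exists one; rewrite ?abelianize1.
- move=> _ _ [u Ku <-] [v Kv <-]; exists (u ** FGinv v); first exact/KM/KV.
  by rewrite abelianizeM abelianizeV.
- move=> k; exists (FGinv (FGgen k) ** phi (FGgen k)); first exact: Ktwisted.
  exact: abelianize_twisted_gen.
Qed.

End SemidirectProduct.

Theorem proposition2p3 (n : nat) (phi psi : FG n -> FG n) :
  (2 <= n)%N ->
  is_FGhom phi -> cancel phi psi -> cancel psi phi ->
  (abmat phi - 1%:M)%R \in unitmx ->
  (forall g : SD n,
     (forall i, (0 < i)%N -> gamma phi psi i g) <-> g.2 = 0%R)
  /\ ~ residually_nilpotent phi psi.
Proof.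
move=> n2 phi_hom _ _ unit_A1.
have gamma_base u i : gamma phi psi i (u, 0%R) by apply: lcs_base.
split=> [[u k] | resnil].
  split=> [/(_ 2 erefl) | /= ->]; [exact: lcs1_snd0 | by move=> i _].
pose x := FGgen (Ordinal n2).
have := resnil (x, 0%R) (fun i _ => gamma_base x i).
by move=> /(congr1 (fun g : SD n => size (sval g.1))).
Qed.
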